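(* For every integer $n\ge0$, with the polynomial matrix $M(x)$ defined below, $\operatorname{Pf}M(x)=(-1)^n\operatorname{Pf}M(-2n-1-x)$ as polynomials in $x$.
   Context: For an indeterminate $y$ and integer $k\ge0$, $\binom yk=y(y-1)\cdots(y-k+1)/k!$. For integers $i,j\ge1$ define the polynomials $R_{i,j}(x)=\sum_{\ell=0}^{i-1}\frac{j-i}{i}\binom{j-1}{i-1-\ell}\binom{\ell+j}{\ell}\binom{2x+2n+2}{\ell+j+1}$ (for integers $x\ge0$ this equals $\sum_{t=1}^{2x+2n+1}\frac{j-i}{t}\binom ti\binom tj$) and $T_{i,j}(x)=\binom{2x+2n+1}{i}\big(\binom{x+n}{j}+\binom{x+n+1}{j}\big)$. $M(x)$ is the $(2n+2)\times(2n+2)$ skew-symmetric matrix with $M_{i,j}(x)=R_{i,j}(x)+T_{i,j}(x)-T_{j,i}(x)$ for $1\le i,j\le 2n+1$ and $M_{i,2n+2}(x)=\binom{x+n}{i-1}$ for $1\le i\le 2n+1$. *)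

From HB Require Import structures.
From mathcomp Require Import all_boot all_order all_algebra all_fingroup.
Set Implicit Arguments. Unset Strict Implicit. Unset Printing Implicit Defensive.
Import Order.TTheory GRing.Theory Num.Theory.
Local Open Scope ring_scope.

Definition binomP (y : {poly rat}) (k : nat) : {poly rat} :=
  ((k`!)%:R : rat)^-1 *: \prod_(i < k) (y - i%:R).

Lemma pf_lt0 m (i : 'I_m) : (i.*2 < m.*2)%N.
Proof. by rewrite ltn_double. Qed.
Lemma pf_lt1 m (i : 'I_m) : (i.*2.+1 < m.*2)%N.
Proof. by rewrite -doubleS leq_double. Qed.

Definition pfaffian (R : comUnitRingType) (m : nat) (A : 'M[R]_(m.*2)) : R :=
  ((2 ^ m * m`!)%N%:R)^-1 *
  \sum_(s : 'S_(m.*2))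
     (-1) ^+ odd_perm s *
     \prod_(i < m) A (s (Ordinal (pf_lt0 i))) (s (Ordinal (pf_lt1 i))).

(* R_{i,j}(x), 1-based indices i j >= 1 *)
Definition Rij (n : nat) (x : {poly rat}) (i j : nat) : {poly rat} :=
  \sum_(l < i)
    (((j%:R - i%:R) / i%:R : rat) * ('C(j.-1, i.-1 - l))%:R * ('C(l + j, l))%:R)
      *: binomP (2%:R * x + (2 * n + 2)%:R) (l + j + 1).

Definition Tij (n : nat) (x : {poly rat}) (i j : nat) : {poly rat} :=
  binomP (2%:R * x + (2 * n + 1)%:R) i *
  (binomP (x + n%:R) j + binomP (x + n%:R + 1) j).

(* Entry M_{a,b}(x) with 1-based indices 1 <= a, b <= 2n+2 *)
Definition Mentry (n : nat) (x : {poly rat}) (a b : nat) : {poly rat} :=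
  if (a <= 2 * n + 1)%N && (b <= 2 * n + 1)%N then
    Rij n x a b + Tij n x a b - Tij n x b a
  else if (a <= 2 * n + 1)%N then binomP (x + n%:R) a.-1
  else if (b <= 2 * n + 1)%N then - binomP (x + n%:R) b.-1
  else 0.

(* The (2n+2) x (2n+2) matrix M(x); row/column k : 'I_(2n+2) is paper index k+1 *)
Definition Mmat (n : nat) (x : {poly rat}) : 'M[{poly rat}]_((n.+1).*2) :=
  \matrix_(a, b) Mentry n x a.+1 b.+1.

From HB Require Import structures.
From mathcomp Require Import all_boot all_order all_algebra all_fingroup.
From mathcomp Require Import ring.
Set Implicit Arguments. Unset Strict Implicit. Unset Printing Implicit Defensive.
Import Order.TTheory GRing.Theory Num.Theory.
Local Open Scope ring_scope.

(* The proof exhibits a constant matrix P with det P = (-1)^n and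
     M(-2n-1-x) = P M(x) P^T,
   and concludes by the congruence law Pf (P A P^T) = det P * Pf A. *)

Section PfaffianCongruence.
Variable R : comUnitRingType.

Lemma prod_pairs_nat (F : nat -> R) m :
  \prod_(0 <= p < m.*2) F p = \prod_(0 <= i < m) (F i.*2 * F i.*2.+1).
Proof.
elim: m => [|m IH]; first by rewrite !big_geq.
by rewrite doubleS !big_nat_recr //= IH mulrA.
Qed.

Variable m : nat.
Local Notation K := 'I_(m.*2).
Local Notation ev i := (Ordinal (pf_lt0 i)).
Local Notation od i := (Ordinal (pf_lt1 i)).

Lemma prod_pairs (h : K -> R) :
  \prod_(p : K) h p = \prod_(i < m) (h (ev i) * h (od i)).
Proof.
pose F p := if insub p is Some q then h q else 1.
have FE (q : K) : F q = h q by rewrite /F valK.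
transitivity (\prod_(p < m.*2) F p); first by apply: eq_bigr => q _; rewrite FE.
by rewrite -(big_mkord xpredT F) prod_pairs_nat big_mkord; apply: eq_bigr => i _; rewrite -!FE.
Qed.

Lemma pair_index_lt (p : K) : (p./2 < m)%N.
Proof. by rewrite ltn_half_double. Qed.
Definition pair_index (p : K) : 'I_m := Ordinal (pair_index_lt p).

(* A family f of m ordered pairs, read as the word f_0.1 f_0.2 f_1.1 ... of
   length 2m; when this word has no repetition it is a permutation of 'I_2m. *)
Definition interleave (f : {ffun 'I_m -> K * K}) (p : K) : K :=
  if odd p then (f (pair_index p)).2 else (f (pair_index p)).1.

Lemma interleave_ev f i : interleave f (ev i) = (f i).1.
Proof.
rewrite /interleave /= odd_double; congr (f _).1; apply: val_inj => /=.
by rewrite doubleK.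
Qed.

Lemma interleave_od f i : interleave f (od i) = (f i).2.
Proof.
rewrite /interleave /= odd_double /=; congr (f _).2; apply: val_inj => /=.
by have := half_bit_double i true; rewrite add1n.
Qed.

Definition perm_of (g : K -> K) : 'S_(m.*2) :=
  if injectiveP g is ReflectT inj then perm inj else 1%g.

Lemma perm_ofE g : injective g -> perm_of g =1 g.
Proof. by move=> ig x; rewrite /perm_of; case: injectiveP => // ig'; rewrite permE. Qed.

Definition pairs_of_perm (s : 'S_(m.*2)) : {ffun 'I_m -> K * K} :=
  [ffun i => (s (ev i), s (od i))].

Lemma interleave_pairs_of_perm s : interleave (pairs_of_perm s) =1 s.
Proof.
move=> p; rewrite /interleave !ffunE; case: ifP => op /=; congr (s _);
  by apply: val_inj => /=; rewrite -[RHS]odd_double_half op.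
Qed.

Lemma interleave_pairs_of_perm_inj s : injectiveb (interleave (pairs_of_perm s)).
Proof.
by apply/injectiveP => x y; rewrite !interleave_pairs_of_perm; apply: perm_inj.
Qed.

Lemma perm_of_pairs_of_perm s : perm_of (interleave (pairs_of_perm s)) = s.
Proof.
apply/permP => x; rewrite perm_ofE ?interleave_pairs_of_perm //.
exact/injectiveP/interleave_pairs_of_perm_inj.
Qed.

Lemma mx_congr_entry (P A : 'M[R]_(m.*2)) u v :
  (P *m A *m P^T) u v = \sum_(q : K * K) (P u q.1 * A q.1 q.2 * P v q.2).
Proof.
rewrite !mxE -(pair_bigA _ (fun k l => P u k * A k l * P v l)) /= exchange_big /=.
apply: eq_bigr => l _; rewrite ?mxE mulr_suml; apply: eq_bigr => k _.
by rewrite ?mxE.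
Qed.

(* Leibniz expansion with the columns of P selected by g: this is the
   determinant of the matrix with rows P^T (g p), which is a signed det P when
   g is a permutation and vanishes (repeated row) otherwise. *)
Lemma leibniz_select (P : 'M[R]_(m.*2)) (g : K -> K) :
  \sum_(s : 'S_(m.*2)) (-1) ^+ s * \prod_(p : K) P (s p) (g p) =
  if injectiveb g then (-1) ^+ perm_of g * \det P else 0.
Proof.
have -> : \sum_(s : 'S_(m.*2)) (-1) ^+ s * \prod_(p : K) P (s p) (g p) =
          \det (\matrix_(p, u) P u (g p)).
  by apply: eq_bigr => s _; congr (_ * _); apply: eq_bigr => p _; rewrite mxE.
case: injectiveP => [ig|nig].
  have -> : \matrix_(p, u) P u (g p) = row_perm (perm_of g) P^T.
    by apply/matrixP => p u; rewrite !mxE perm_ofE.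
  by rewrite row_permE det_mulmx det_perm det_tr.
have : [exists p1, exists p2, (p1 != p2) && (g p1 == g p2)].
  apply: contraT => noncollide; case: nig => x y exy; apply/eqP.
  apply: contraTT noncollide => nxy; rewrite negbK.
  by apply/existsP; exists x; apply/existsP; exists y; rewrite nxy exy eqxx.
case/existsP => p1 /existsP [p2 /andP [ne12 /eqP e12]].
by apply: (determinant_alternate ne12) => u; rewrite !mxE e12.
Qed.

(* Expanding every entry of P A P^T turns the Pfaffian sum into a sum over
   families of pairs, weighted by a selected Leibniz sum of P. *)
Lemma pf_sum_congr (P A : 'M[R]_(m.*2)) :
  \sum_(s : 'S_(m.*2)) (-1) ^+ s * \prod_(i < m) (P *m A *m P^T) (s (ev i)) (s (od i)) =
  \sum_(f : {ffun 'I_m -> K * K}) (\prod_i A (f i).1 (f i).2) *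
     (if injectiveb (interleave f) then (-1) ^+ perm_of (interleave f) * \det P else 0).
Proof.
under eq_bigr => s _.
  rewrite (eq_bigr (fun i => \sum_(q : K * K)
      P (s (ev i)) q.1 * A q.1 q.2 * P (s (od i)) q.2)); last by move=> i _; rewrite mx_congr_entry.
  rewrite bigA_distr_bigA /= mulr_sumr.
  over.
rewrite exchange_big /=; apply: eq_bigr => f _.
rewrite -leibniz_select mulr_sumr; apply: eq_bigr => s _.
rewrite mulrCA; congr (_ * _).
rewrite (prod_pairs (fun p => P (s p) (interleave f p))) -big_split /=.
by apply: eq_bigr => i _; rewrite interleave_ev interleave_od [P _ _ * _]mulrC -mulrA.
Qed.

(* Only the families coming from permutations contribute, and they
   reassemble the Pfaffian sum of A. *)
Lemma pf_sum_pairs (P A : 'M[R]_(m.*2)) :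
  \sum_(f : {ffun 'I_m -> K * K}) (\prod_i A (f i).1 (f i).2) *
     (if injectiveb (interleave f) then (-1) ^+ perm_of (interleave f) * \det P else 0) =
  \det P * \sum_(s : 'S_(m.*2)) (-1) ^+ s * \prod_(i < m) A (s (ev i)) (s (od i)).
Proof.
rewrite (bigID (fun f => injectiveb (interleave f))) /= [X in _ + X]big1 ?addr0;
  last by move=> f /negbTE ->; rewrite mulr0.
rewrite (reindex_onto pairs_of_perm (fun f => perm_of (interleave f))) /=; last first.
  move=> f /injectiveP ig; apply/ffunP => i.
  by rewrite ffunE !perm_ofE // interleave_ev interleave_od; case: (f i).
rewrite mulr_sumr; apply: eq_big => [s|s _].
  by rewrite interleave_pairs_of_perm_inj perm_of_pairs_of_perm eqxx.
rewrite interleave_pairs_of_perm_inj perm_of_pairs_of_perm.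
under eq_bigr => i _ do rewrite ffunE.
by rewrite mulrC -mulrA mulrCA.
Qed.

Lemma pfaffian_congr (P A : 'M[R]_(m.*2)) :
  pfaffian (P *m A *m P^T) = \det P * pfaffian A.
Proof. by rewrite /pfaffian mulrCA pf_sum_congr pf_sum_pairs. Qed.

End PfaffianCongruence.

Section GeneralizedBinomial.
Variable F : numFieldType.
Implicit Types (r z w : F) (k : nat).

Definition gbin r k : F := (k`!%:R)^-1 * \prod_(i < k) (r - i%:R).

Lemma natr_fact_neq0 k : (k`!%:R : F) != 0.
Proof. by rewrite pnatr_eq0 -lt0n fact_gt0. Qed.

Lemma natrS_neq0 k : (k.+1%:R : F) != 0.
Proof. by rewrite pnatr_eq0. Qed.

Lemma gbin0 r : gbin r 0 = 1.
Proof. by rewrite /gbin big_ord0 fact0 invr1 mulr1. Qed.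

Lemma gbinS r k : k.+1%:R * gbin r k.+1 = gbin r k * (r - k%:R).
Proof.
rewrite /gbin big_ord_recr /= factS natrM invfM.
by field; rewrite natr_fact_neq0 addrC natr1 natrS_neq0.
Qed.

Lemma gbin_absorb r k : r * gbin (r - 1) k = k.+1%:R * gbin r k.+1.
Proof.
rewrite /gbin big_ord_recl /= factS natrM invfM subr0.
have -> : \prod_(i < k) (r - (bump 0 i)%:R) = \prod_(i < k) (r - 1 - i%:R).
  by apply: eq_bigr => i _; rewrite /bump /= natrD opprD addrA.
by field; rewrite natr_fact_neq0 addrC natr1 natrS_neq0.
Qed.

Lemma gbin_pascal r k : gbin (r + 1) k.+1 = gbin r k.+1 + gbin r k.
Proof.
apply: (mulfI (natrS_neq0 k)); rewrite -[LHS]gbin_absorb addrK mulrDr gbinS.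
ring.
Qed.

Lemma gbin_mul_top r k : r * gbin r k = k.+1%:R * gbin r k.+1 + k%:R * gbin r k.
Proof. by rewrite gbinS; ring. Qed.

Lemma gbin_neg r k : gbin (- r) k = (-1) ^+ k * gbin (r + k%:R - 1) k.
Proof.
elim: k => [|k IH]; first by rewrite !gbin0 expr0 mulr1.
apply: (mulfI (natrS_neq0 k)); rewrite gbinS IH [RHS]mulrCA -gbin_absorb.
have -> : r + k.+1%:R - 1 - 1 = r + k%:R - 1 by rewrite -addn1 natrD; ring.
by rewrite exprS; ring.
Qed.

Lemma gbin0_S k : gbin 0 k.+1 = 0.
Proof. by rewrite /gbin big_ord_recl /= subr0 mul0r mulr0. Qed.

Lemma gbin1_SS k : gbin 1 k.+2 = 0.
Proof.
apply: (mulfI (natrS_neq0 k.+1)).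
by rewrite -gbin_absorb subrr gbin0_S; ring.
Qed.

Lemma gbin_vandermonde z p q :
  \sum_(c < p.+1) 'C(p, c)%:R * gbin z (c + q) = gbin (z + p%:R) (p + q).
Proof.
elim: p q => [|p IH] q; first by rewrite big_ord1 bin0 mul1r addr0.
rewrite big_ord_recl bin0 mul1r.
rewrite (eq_bigr (fun c : 'I_p.+1 => 'C(p, c.+1)%:R * gbin z (c.+1 + q) +
                                   'C(p, c)%:R * gbin z (c + q.+1))); last first.
  by move=> c _; rewrite lift0 binS natrD mulrDl addnS addSn.
rewrite big_split /= IH addrA.
have -> : gbin z (0 + q) + \sum_(i < p.+1) 'C(p, i.+1)%:R * gbin z (i.+1 + q) =
          \sum_(c < p.+2) 'C(p, c)%:R * gbin z (c + q).
  by rewrite [RHS]big_ord_recl bin0 mul1r.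
rewrite big_ord_recr /= bin_small // mul0r addr0 IH addnS -natr1 addrA.
by rewrite gbin_pascal addrC.
Qed.

Lemma gbin_vandermonde_le z p q N : (p < N)%N ->
  \sum_(c < N) 'C(p, c)%:R * gbin z (c + q) = gbin (z + p%:R) (p + q).
Proof.
move=> hpN; rewrite -(subnKC hpN) big_split_ord /= [X in _ + X]big1 ?addr0.
  exact: gbin_vandermonde.
by move=> i _; rewrite bin_small ?mul0r //= ltnS leq_addr.
Qed.

Lemma natr_mul_bin_left n t :
  t.+1%:R * ('C(n, t.+1)%:R : F) = (n%:R - t%:R) * 'C(n, t)%:R.
Proof.
have := congr1 (fun x => x%:R : F) (mul_bin_left n t); rewrite !natrM => ->.
have [htn|htn] := leqP t n; first by rewrite natrB.
by rewrite bin_small // !mulr0.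
Qed.

Lemma natr_mul_bin_diag n t :
  n.+1%:R * ('C(n, t)%:R : F) = t.+1%:R * 'C(n.+1, t.+1)%:R.
Proof. by have := congr1 (fun x => x%:R : F) (mul_bin_diag n.+1 t); rewrite !natrM. Qed.

(* Coefficients of the product formula below: multiplying
   C(j+l, l) C(j, i-l) C(z, j+l) by (z - i) contributes [shift] to the term
   C(z, j+l+1) and [stay] to the term C(z, j+l). *)
Definition prod_coef_shift (i j l : nat) : F :=
  if l is l'.+1 then ('C(j + l', l') * 'C(j, i - l'))%:R * (j + l)%:R else 0.
Definition prod_coef_stay (i j l : nat) : F :=
  if (l <= i)%N then ('C(j + l, l) * 'C(j, i - l))%:R * ((j + l)%:R - i%:R) else 0.

Lemma prod_coef_step i j l : (l <= i.+1)%N ->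
  (i.+1 * ('C(j + l, l) * 'C(j, i.+1 - l)))%:R =
  prod_coef_shift i j l + prod_coef_stay i j l :> F.
Proof.
rewrite /prod_coef_shift /prod_coef_stay; case: l => [|l] hl.
  by rewrite !addn0 !bin0 !mul1n subn0 add0r natrM subn0 natr_mul_bin_left mulrC.
rewrite leq_eqVlt in hl; case/orP: hl => [/eqP [->]|hl].
  rewrite ltnn !subnn !bin0 !muln1 addr0 natrM !addnS [RHS]mulrC.
  by rewrite natr_mul_bin_diag mulrC.
rewrite ltnS in hl; rewrite hl.
have [t ->] : exists t, i = (l + t).+1 by exists (i - l.+1)%N; rewrite -addSn subnKC.
have -> : ((l + t).+2 - l.+1 = t.+1)%N by rewrite subSS -addnS addKn.
have -> : ((l + t).+1 - l = t.+1)%N by rewrite -addnS addKn.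
have -> : ((l + t).+1 - l.+1 = t)%N by rewrite subSS addKn.
rewrite !natrM !addnS.
have e1 := natr_mul_bin_diag (j + l) l.
have e2 := natr_mul_bin_left j t.
apply/eqP; rewrite -subr_eq0; apply/eqP.
transitivity (- ('C(j, t.+1)%:R * ((j + l).+1%:R * 'C(j + l, l)%:R
                                   - l.+1%:R * 'C((j + l).+1, l.+1)%:R))
   + 'C((j + l).+1, l.+1)%:R * (t.+1%:R * 'C(j, t.+1)%:R - (j%:R - t%:R) * 'C(j, t)%:R) : F).
  by ring.
by rewrite e1 e2 !subrr !mulr0 oppr0 addr0.
Qed.

Lemma gbin_mul z i j : gbin z i * gbin z j =
  \sum_(l < i.+1) ('C(j + l, l) * 'C(j, i - l))%:R * gbin z (j + l).
Proof.
elim: i => [|i IH]; first by rewrite big_ord1 gbin0 mul1r /= !addn0 !bin0 mul1r.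
apply: (mulfI (natrS_neq0 i)).
transitivity (\sum_(l < i.+1) (('C(j + l, l) * 'C(j, i - l))%:R *
     (j + l).+1%:R * gbin z (j + l).+1 + prod_coef_stay i j l * gbin z (j + l))).
  rewrite mulrA gbinS -mulrA [(_ - _) * gbin z j]mulrC mulrA IH mulr_suml.
  apply: eq_bigr => l _; rewrite /prod_coef_stay -ltnS ltn_ord.
  have := gbin_mul_top z (j + l).
  move: (gbin z (j + l)) (gbin z (j + l).+1) => g g1 e.
  transitivity (('C(j + l, l) * 'C(j, i - l))%:R * (z * g - i%:R * g)); first by ring.
  by rewrite e; ring.
rewrite mulr_sumr.
transitivity (\sum_(l < i.+2)
   (prod_coef_shift i j l * gbin z (j + l) + prod_coef_stay i j l * gbin z (j + l))).
  symmetry; rewrite big_split /= [X in X + _ = _]big_ord_recl [X in _ + X = _]big_ord_recr /=.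
  have -> : prod_coef_stay i j i.+1 = 0 by rewrite /prod_coef_stay ltnn.
  rewrite !mul0r add0r addr0 -big_split /=.
  by apply: eq_bigr => l _; rewrite !add0n (_ : bump 0 l = l.+1) // addnS.
apply: eq_bigr => l _; rewrite -mulrDl -prod_coef_step ?natrM ?mulrA //.
by rewrite -ltnS.
Qed.

(* A shifted form of the product formula, obtained from it by absorption:
   C(z-1, p) C(z, q+1) = sum_l C(q, p-l) C(l+q+1, l) C(z, l+q+1). *)
Lemma gbin_mul_shift z p q : gbin (z - 1) p * gbin z q.+1 =
  \sum_(l < p.+1) ('C(q, p - l) * 'C(l + q.+1, l))%:R * gbin z (l + q.+1).
Proof.
apply: (mulfI (natrS_neq0 q)); rewrite mulrCA -gbin_absorb mulrCA gbin_mul !mulr_sumr.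
apply: eq_bigr => l _; rewrite mulrCA gbin_absorb addnC -addnS !natrM.
have coef : (l + q).+1%:R * 'C(l + q, l)%:R = q.+1%:R * 'C((l + q).+1, l)%:R :> F.
  have := congr1 (fun x => x%:R : F) (mul_bin_down (l + q.+1) l).
  by rewrite !natrM addnS /= => ->; rewrite -addnS addKn addnS.
rewrite !addnS.
transitivity ('C(q, p - l)%:R * gbin z (l + q).+1 * ((l + q).+1%:R * 'C(l + q, l)%:R));
  by [ring | rewrite coef; ring].
Qed.

(* The coefficients of the polynomial R_{i,j} of the paper, as a linear
   combination of the binomials C(z, l+j+1) with z = 2x+2n+2. *)
Definition rcoef (i j l : nat) : F :=
  ((j%:R - i%:R) / i%:R) * ('C(j.-1, i.-1 - l))%:R * ('C(l + j, l))%:R.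
Definition rsum z (i j : nat) : F := \sum_(l < i) rcoef i j l * gbin z (l + j + 1).

(* The increment rsum (z+1) - rsum z; it equals (j-i)/z C(z,i) C(z,j), which
   is the summand of the paper's expression of R_{i,j} as a sum over t. *)
Definition rstep z (i j : nat) : F :=
  gbin z i * gbin (z - 1) j.-1 - gbin (z - 1) i.-1 * gbin z j.

(* Both sides equal z C(z-1, p) C(z-1, q). *)
Lemma gbin_absorb_swap z p q :
  p.+1%:R * (gbin z p.+1 * gbin (z - 1) q) = q.+1%:R * (gbin (z - 1) p * gbin z q.+1).
Proof. by rewrite mulrA -gbin_absorb [RHS]mulrCA -gbin_absorb; ring. Qed.

(* The R-coefficients sum to the increment: by the shifted product formula
   the sum is (q-p)/(p+1) C(z-1,p) C(z,q+1). *)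
Lemma rcoef_sum z p q :
  \sum_(l < p.+1) rcoef p.+1 q.+1 l * gbin z (l + q.+1) = rstep z p.+1 q.+1.
Proof.
rewrite (_ : \sum_(l < p.+1) _ =
   (q.+1%:R - p.+1%:R) / p.+1%:R * (gbin (z - 1) p * gbin z q.+1)); last first.
  by rewrite gbin_mul_shift mulr_sumr; apply: eq_bigr => l _; rewrite /rcoef /= !natrM; ring.
apply: (mulfI (natrS_neq0 p)); rewrite /rstep /= mulrBr gbin_absorb_swap.
by field; rewrite addrC natr1 natrS_neq0.
Qed.

Lemma rsum_diff z p q : rsum (z + 1) p.+1 q.+1 - rsum z p.+1 q.+1 = rstep z p.+1 q.+1.
Proof.
rewrite /rsum -sumrB -rcoef_sum; apply: eq_bigr => l _.
by rewrite -mulrBr addn1 gbin_pascal addrAC subrr add0r.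
Qed.

(* The initial value of the recursion: all binomials C(1, l+j+1) vanish. *)
Lemma rsum_at1 i q : rsum 1 i q.+1 = 0.
Proof. by rewrite /rsum big1 // => l _; rewrite addn1 addnS gbin1_SS mulr0. Qed.

(* Entries (-1)^a C(a, c) of the lower triangular involution implementing
   upper negation of binomials (binomial inversion). *)
Definition alt_bin (a c : nat) : F := (-1) ^+ a * 'C(a, c)%:R.

Lemma alt_bin_small a N : (a < N)%N -> alt_bin a N = 0.
Proof. by move=> h; rewrite /alt_bin bin_small // mulr0. Qed.

(* The action of the involution on binomials, by upper negation and
   Vandermonde: sum_c (-1)^a C(a,c) C(w,c) = C(-w-1, a). *)
Lemma alt_bin_gbin N a w : (a < N)%N ->
  \sum_(c < N) alt_bin a c * gbin w c = gbin (- w - 1) a.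
Proof.
move=> haN; rewrite -opprD gbin_neg.
transitivity ((-1) ^+ a * \sum_(c < N) 'C(a, c)%:R * gbin w (c + 0)%N).
  by rewrite mulr_sumr; apply: eq_bigr => c _; rewrite /alt_bin addn0 -mulrA.
by rewrite gbin_vandermonde_le // addn0; congr (_ * gbin _ _); ring.
Qed.

Lemma alt_bin_gbinS N a w : (a < N)%N ->
  \sum_(c < N) alt_bin a c * gbin w c.+1 = - gbin (- w) a.+1.
Proof.
move=> haN; rewrite gbin_neg.
transitivity ((-1) ^+ a * \sum_(c < N) 'C(a, c)%:R * gbin w (c + 1)%N).
  by rewrite mulr_sumr; apply: eq_bigr => c _; rewrite /alt_bin addn1 -mulrA.
rewrite gbin_vandermonde_le // addn1 exprS mulN1r mulNr opprK.
by congr (_ * gbin _ _); rewrite -natr1; ring.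
Qed.

Lemma sum_mul_sep N (u v f g : nat -> F) :
  \sum_(c < N) \sum_(d < N) u c * v d * (f c * g d) =
  (\sum_(c < N) u c * f c) * (\sum_(d < N) v d * g d).
Proof.
rewrite mulr_suml; apply: eq_bigr => c _; rewrite mulr_sumr; apply: eq_bigr => d _.
by ring.
Qed.

Definition alt_transform N (X : nat -> nat -> F) (a b : nat) : F :=
  \sum_(c < N) \sum_(d < N) alt_bin a c * alt_bin b d * X c.+1 d.+1.

Lemma alt_transform_rstep N a b z : (a < N)%N -> (b < N)%N ->
  alt_transform N (rstep z) a b =
  gbin (- z) a * gbin (- z) b.+1 - gbin (- z) a.+1 * gbin (- z) b.
Proof.
move=> haN hbN; rewrite /alt_transform /rstep /=.
under eq_bigr => c _ do under eq_bigr => d _ do rewrite mulrBr.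
under eq_bigr => c _ do rewrite sumrB.
rewrite sumrB.
rewrite (sum_mul_sep N (alt_bin a) (alt_bin b) (fun c => gbin z c.+1) (gbin (z - 1))).
rewrite (sum_mul_sep N (alt_bin a) (alt_bin b) (gbin (z - 1)) (fun d => gbin z d.+1)).
rewrite !alt_bin_gbinS // !alt_bin_gbin // (_ : - (z - 1) - 1 = - z); last by ring.
by ring.
Qed.

(* Reflection of R: the binomial transform of rsum z equals rsum (2 - z), at
   every positive integer z (by induction, comparing increments). *)
Lemma alt_transform_rsum N a b k : (a < N)%N -> (b < N)%N ->
  alt_transform N (rsum k.+1%:R) a b = rsum (2 - k.+1%:R) a.+1 b.+1.
Proof.
move=> haN hbN; apply/eqP; rewrite -subr_eq0; apply/eqP.
elim: k => [|k IH].
  rewrite /alt_transform big1 ?sub0r => [|c _]; last first.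
    by rewrite big1 // => d _; rewrite rsum_at1 mulr0.
  by rewrite (_ : 2 - 1 = 1) ?rsum_at1 ?oppr0 //; ring.
rewrite -{}IH -natr1; set z : F := k.+1%:R.
have step_T : alt_transform N (rsum (z + 1)) a b =
              alt_transform N (rsum z) a b + alt_transform N (rstep z) a b.
  rewrite -[LHS](subrK (alt_transform N (rsum z) a b)) addrC; congr (_ + _).
  rewrite /alt_transform -sumrB; apply: eq_bigr => c _; rewrite -sumrB.
  by apply: eq_bigr => d _; rewrite -mulrBr rsum_diff.
have step_R : rsum (2 - (z + 1)) a.+1 b.+1 =
              rsum (2 - z) a.+1 b.+1 - rstep (- z + 1) a.+1 b.+1.
  have -> : 2 - (z + 1) = - z + 1 by ring.
  by rewrite -rsum_diff (_ : - z + 1 + 1 = 2 - z); ring.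
rewrite step_T step_R alt_transform_rstep // /rstep /= addrK !gbin_pascal.
by ring.
Qed.

Lemma alt_transform_tr N X a b :
  alt_transform N (fun i j => X j i) a b = alt_transform N X b a.
Proof.
rewrite /alt_transform exchange_big /=.
by apply: eq_bigr => d _; apply: eq_bigr => c _; rewrite [alt_bin a c * _]mulrC.
Qed.

Lemma alt_transform_DB N X Y Z a b :
  alt_transform N (fun i j => X i j + Y i j - Z i j) a b =
  alt_transform N X a b + alt_transform N Y a b - alt_transform N Z a b.
Proof.
rewrite /alt_transform -big_split -sumrB; apply: eq_bigr => c _.
by rewrite -big_split -sumrB; apply: eq_bigr => d _; rewrite mulrBr mulrDr.
Qed.

Lemma alt_transform_gbin_prod N w y a b : (a < N)%N -> (b < N)%N ->
  alt_transform N (fun i j => gbin w i * (gbin y j + gbin (y + 1) j)) a b =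
  gbin (- w) a.+1 * (gbin (- y) b.+1 + gbin (- y - 1) b.+1).
Proof.
move=> haN hbN; rewrite /alt_transform.
rewrite (sum_mul_sep N (alt_bin a) (alt_bin b) (fun c => gbin w c.+1)
                     (fun d => gbin y d.+1 + gbin (y + 1) d.+1)).
under [X in _ * X = _]eq_bigr => d _ do rewrite mulrDr.
by rewrite big_split /= !alt_bin_gbinS // opprD; ring.
Qed.
End GeneralizedBinomial.

Arguments rcoef {F} i j l.
Arguments alt_bin {F} a c.

Lemma hornerNat (R : nzRingType) (k : nat) (t : R) : (k%:R : {poly R}).[t] = k%:R.
Proof. by rewrite -polyC_natr hornerC. Qed.

Lemma binomP_eval y k t : (binomP y k).[t] = gbin y.[t] k.
Proof.
rewrite /binomP hornerZ horner_prod /gbin; congr (_ * _); apply: eq_bigr => i _.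
by rewrite hornerD hornerN hornerNat.
Qed.

Section ReflectedMatrix.
Variable n : nat.
Local Notation N := (2 * n + 1)%N.
Implicit Types (t : rat) (a b c d i j : nat).

Definition tpart t i j : rat :=
  gbin (2%:R * t + N%:R) i * (gbin (t + n%:R) j + gbin (t + n%:R + 1) j).
Definition block_val t i j : rat :=
  rsum (2%:R * t + (2 * n + 2)%:R) i j + tpart t i j - tpart t j i.
Definition entry_val t a b : rat :=
  if (a <= N)%N && (b <= N)%N then block_val t a b
  else if (a <= N)%N then gbin (t + n%:R) a.-1
  else if (b <= N)%N then - gbin (t + n%:R) b.-1
  else 0.

Lemma Mentry_eval x a b t : (Mentry n x a b).[t] = entry_val x.[t] a b.
Proof.
have lin2 c : (2%:R * x + c%:R).[t] = 2%:R * x.[t] + c%:R.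
  by rewrite hornerD hornerM !hornerNat.
have lin1 c : (x + c%:R).[t] = x.[t] + c%:R by rewrite hornerD hornerNat.
have lin1S c : (x + c%:R + 1).[t] = x.[t] + c%:R + 1.
  by rewrite !hornerD hornerNat -polyC1 hornerC.
rewrite /Mentry /entry_val; case: ifP => _.
  rewrite /Rij /Tij /block_val /tpart /rsum !(hornerD, hornerN, hornerM) horner_sum.
  rewrite !binomP_eval !lin2 !lin1S !lin1; congr (_ + _ - _).
  by apply: eq_bigr => l _; rewrite hornerZ binomP_eval lin2.
case: ifP => _; first by rewrite binomP_eval lin1.
case: ifP => _; first by rewrite hornerN binomP_eval lin1.
by rewrite horner0.
Qed.

Local Notation refl t := (- N%:R - t).

Lemma refl_args t :
  [/\ 2%:R * refl t + (2 * n + 2)%:R = 2 - (2%:R * t + (2 * n + 2)%:R),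
      - (2%:R * t + N%:R) = 2%:R * refl t + N%:R,
      - (t + n%:R) - 1 = refl t + n%:R &
      - (t + n%:R) = refl t + n%:R + 1 :> rat].
Proof. by split; rewrite ?natrD ?natrM; ring. Qed.

Lemma block_val_refl t k a b : 2%:R * t + (2 * n + 2)%:R = k.+1%:R ->
  (a < N)%N -> (b < N)%N ->
  block_val (refl t) a.+1 b.+1 = alt_transform N (block_val t) a b.
Proof.
move=> hz ha hb; have [e1 e2 e3 e4] := refl_args t.
rewrite /block_val alt_transform_DB e1 hz -(alt_transform_rsum _ k ha hb).
congr (_ + _ - _); first by rewrite /tpart alt_transform_gbin_prod // e2 e3 e4; ring.
rewrite (alt_transform_tr N (tpart t) a b) /tpart.
by rewrite alt_transform_gbin_prod // e2 e3 e4; ring.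
Qed.

(* The matrix P: the involution alt_bin on the first 2n+1 coordinates,
   extended by the identity on the last one. *)
Definition inv_entry a c : rat := if (a < N)%N then alt_bin a c else (c == N)%:R.

Lemma size_M : ((n.+1).*2 = N.+1)%N.
Proof. by rewrite doubleS -mul2n addn1. Qed.

Definition inv_sum a (G : nat -> rat) : rat :=
  \sum_(c < (n.+1).*2) inv_entry a c * G c.

Lemma inv_sum_recr a G :
  inv_sum a G = \sum_(c < N) inv_entry a c * G c + inv_entry a N * G N.
Proof.
by rewrite /inv_sum -(big_mkord xpredT (fun c => inv_entry a c * G c)) size_M
   big_nat_recr //= big_mkord.
Qed.

Lemma inv_sum_lt a G : (a < N)%N -> inv_sum a G = \sum_(c < N) alt_bin a c * G c.
Proof.
by move=> ha; rewrite inv_sum_recr /inv_entry ha alt_bin_small // mul0r addr0.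
Qed.

Lemma inv_sum_last G : inv_sum N G = G N.
Proof.
rewrite inv_sum_recr /inv_entry ltnn eqxx mul1r big1 ?add0r // => c _.
by rewrite (ltn_eqF (ltn_ord c)) mul0r.
Qed.

(* Entrywise form of M(-2n-1-x) = P M(x) P^T at the points above. *)
Lemma entry_val_refl t k a b : 2%:R * t + (2 * n + 2)%:R = k.+1%:R ->
  (a <= N)%N -> (b <= N)%N ->
  entry_val (refl t) a.+1 b.+1 =
  inv_sum b (fun d => inv_sum a (fun c => entry_val t c.+1 d.+1)).
Proof.
move=> hz; have [_ _ e3 _] := refl_args t.
rewrite leq_eqVlt => /predU1P [-> | ha]; rewrite leq_eqVlt => /predU1P [-> | hb].
- by rewrite !inv_sum_last /entry_val ltnn.
- rewrite inv_sum_lt //; under eq_bigr => d _ do rewrite inv_sum_last.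
  rewrite /entry_val ltnn /= hb -e3 -(alt_bin_gbin _ hb) -sumrN.
  by apply: eq_bigr => d _; rewrite ?ltnn ltn_ord mulrN.
- rewrite inv_sum_last inv_sum_lt // /entry_val ltnn ha /= -e3 -(alt_bin_gbin _ ha).
  by apply: eq_bigr => c _; rewrite ?ltnn ltn_ord.
- rewrite [LHS]/entry_val ha hb /= (block_val_refl hz ha hb) inv_sum_lt //.
  rewrite /alt_transform exchange_big /=; apply: eq_bigr => d _.
  rewrite inv_sum_lt // mulr_sumr; apply: eq_bigr => c _.
  by rewrite /entry_val !ltn_ord /= [alt_bin a c * _]mulrC mulrA.
Qed.
End ReflectedMatrix.

Lemma poly_eq_on_seq (R : idomainType) (p q : {poly R}) (f : nat -> R) :
  injective f -> (forall k, p.[f k] = q.[f k]) -> p = q.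
Proof.
move=> finj hpq; apply/eqP; rewrite -subr_eq0; apply/negPn/negP => pq_neq0.
have : (size (map f (iota 0 (size (p - q)%R))) < size (p - q)%R)%N.
  apply: max_poly_roots pq_neq0 _ _; last by rewrite map_inj_uniq // iota_uniq.
  by apply/allP => x /mapP [k _ ->]; rewrite /root hornerD hornerN hpq subrr.
by rewrite size_map size_iota ltnn.
Qed.

(* prod_(i < 2m+1) (-1)^i = (-1)^(m(2m+1)) = (-1)^m. *)
Lemma prod_alt_sign (R : comRingType) (m : nat) :
  \prod_(i < 2 * m + 1) ((-1) ^+ i : R) = (-1) ^+ m.
Proof.
rewrite -(big_mkord xpredT (fun i => (-1) ^+ i : R)).
elim: m => [|m IH]; first by rewrite big_nat1 expr0.
have -> : (2 * m.+1 + 1 = (2 * m + 1).+2)%N by rewrite mulnS.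
rewrite !big_nat_recr //= IH -!mulrA -exprD exprS.
by rewrite addnS addnn -mul2n exprS exprM sqrrN !expr1n mulr1 mulrC.
Qed.

Section Reflection.
Variable n : nat.
Local Notation N := (2 * n + 1)%N.

Definition Pmat : 'M[{poly rat}]_((n.+1).*2) := \matrix_(a, c) (inv_entry n a c)%:P.

Lemma congr_entry_eval (a b : 'I_((n.+1).*2)) t :
  ((Pmat *m Mmat n 'X *m Pmat^T) a b).[t] =
  inv_sum n b (fun d => inv_sum n a (fun c => entry_val n t c.+1 d.+1)).
Proof.
rewrite !mxE horner_sum /inv_sum; apply: eq_bigr => d _.
rewrite !mxE hornerM horner_sum hornerC mulrC; congr (_ * _).
by apply: eq_bigr => c _; rewrite !mxE hornerM hornerC Mentry_eval hornerX.
Qed.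

Definition eval_pt (k : nat) : rat := (k.+1%:R - (2 * n + 2)%:R) / 2.

Lemma eval_pt_inj : injective eval_pt.
Proof.
move=> k1 k2; rewrite /eval_pt => /(mulIf _) h.
have /h : (2 : rat) != 0 by [].
by move/addIr/eqP; rewrite eqr_nat eqSS => /eqP.
Qed.

Lemma eval_pt_arg k : 2%:R * eval_pt k + (2 * n + 2)%:R = k.+1%:R.
Proof. by rewrite /eval_pt mulrC divfK // subrK. Qed.

Lemma Mmat_refl : Mmat n (- N%:R - 'X) = Pmat *m Mmat n 'X *m Pmat^T.
Proof.
apply/matrixP => a b; apply: (poly_eq_on_seq eval_pt_inj) => k.
have ha : (a <= N)%N by rewrite -ltnS -size_M.
have hb : (b <= N)%N by rewrite -ltnS -size_M.
rewrite congr_entry_eval mxE Mentry_eval hornerD !hornerN hornerNat hornerX.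
exact: entry_val_refl (eval_pt_arg k) ha hb.
Qed.

(* P is lower triangular with diagonal (-1)^0, ..., (-1)^(2n), 1. *)
Lemma det_Pmat : \det Pmat = (-1) ^+ n.
Proof.
rewrite det_trig; last first.
  apply/forallP => i; apply/forallP => j; apply/implyP => hij.
  have hi : (i < N)%N by apply: (leq_trans hij); rewrite -ltnS -size_M.
  by rewrite mxE /inv_entry hi /alt_bin bin_small // mulr0.
transitivity ((\prod_(i < (n.+1).*2) inv_entry n i i)%:P).
  by rewrite rmorph_prod; apply: eq_bigr => i _; rewrite mxE.
rewrite -(big_mkord xpredT (fun i => inv_entry n i i)) size_M big_nat_recr //=.
rewrite {2}/inv_entry ltnn eqxx mulr1 big_mkord.
rewrite (eq_bigr (fun i : 'I_N => (-1) ^+ i : rat)); last first.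
  by move=> i _; rewrite /inv_entry ltn_ord /alt_bin binn mulr1.
by rewrite prod_alt_sign rmorphXn /= polyCN polyC1.
Qed.
End Reflection.

(* Pf M(-2n-1-x) = det P * Pf M(x) = (-1)^n Pf M(x), and (-1)^n squares to 1. *)
Theorem mainTheorem10 (n : nat) :
  pfaffian (Mmat n 'X) =
  (-1) ^+ n * pfaffian (Mmat n (- (2 * n + 1)%:R - 'X)).
Proof.
by rewrite Mmat_refl pfaffian_congr det_Pmat mulrA -expr2 sqrr_sign mul1r.
Qed.
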